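(* Let $U$ be the transition matrix of a quantum random walk (QRW) on $\mathcal I=\mathbb Z$ or on $\mathcal I=\mathbb Z_{\ge 0}$ with arbitrary non trivial (not necessarily equal) coins, and let $\mu_n$ ($n\ge 0$) denote the $n$-th moment of the orthogonality measure associated with the walk (scalar if $\mathcal I=\mathbb Z_{\ge0}$, $2\times2$ matrix valued if $\mathcal I=\mathbb Z$). Then, as $n\to\infty$: (1) $U^n$ converges weakly to zero if and only if $\mu_n\to 0$. (2) For any sequence $(e^{i\theta_n})_{n\ge0}$ of phases ($\theta_n\in\mathbb R$), $e^{-i\theta_n}U^n$ has a non null weak limit if and only if $e^{-i\theta_n}\mu_n$ converges to a non null limit and $\lim_{n\to\infty}e^{i(\theta_{n+1}-\theta_n)}$ exists.
   Context: Coins: for each site $i\in\mathcal I$, $C_i=\begin{pmatrix}c^i_{11}&c^i_{12}\\ c^i_{21}&c^i_{22}\end{pmatrix}$ is a $2\times2$ unitary matrix; it is called non trivial if $c^i_{11}\neq0$ (equivalently $c^i_{22}\ne0$). All coins are assumed non trivial. The Hilbert space is $\ell^2$ over the pure states $|i\rangle\otimes|s\rangle$, $i\in\mathcal I$, $s\in\{\uparrow,\downarrow\}$; a matrix $U=(U_{j,k})$ indexed by pure states has $U_{j,k}$ = amplitude of the one-step transition from $j$ to $k$, states evolve as row vectors $\psi_n=\psi_0U^n$. Case $\mathcal I=\mathbb Z_{\ge0}$: number the pure states $|0\uparrow\rangle,|0\downarrow\rangle,|1\uparrow\rangle,|1\downarrow\rangle,\dots$ as $0,1,2,3,\dots$ (so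 $|i\uparrow\rangle=2i$, $|i\downarrow\rangle=2i+1$). The unitary transition matrix $U$ has as only non-zero entries: $U_{2i,2i+2}=c^i_{11}$, $U_{2i+1,2i+2}=c^i_{12}$ for $i\ge0$; $U_{2i,2i-1}=c^i_{21}$, $U_{2i+1,2i-1}=c^i_{22}$ for $i\ge1$; and $U_{0,0}=c^0_{21}$, $U_{1,0}=c^0_{22}$. The associated orthogonality measure $\mu$ is the unique probability measure on the unit circle $\mathbb T$ with $\int_{\mathbb T}z^n\,d\mu(z)=(U^n)_{0,0}$ for all $n\in\mathbb Z$; its moments are $\mu_n=\int_{\mathbb T}z^n d\mu$. Case $\mathcal I=\mathbb Z$: the unitary transition matrix is given by $|i\uparrow\rangle\mapsto c^i_{11}|i+1\uparrow\rangle+c^i_{21}|i-1\downarrow\rangle$, $|i\downarrow\rangle\mapsto c^i_{12}|i+1\uparrow\rangle+c^i_{22}|i-1\downarrow\rangle$ (i.e. $U_{i\uparrow,(i+1)\uparrow}=c^i_{11}$, $U_{i\uparrow,(i-1)\downarrow}=c^i_{21}$, $U_{i\downarrow,(i+1)\uparrow}=c^i_{12}$, $U_{i\downarrow,(i-1)\downarrow}=c^i_{22}$, all other entries $0$). Reorder (''fold'') the pure states as $0,1,2,\dots$ via $4m\mapsto|m\uparrow\rangle$, $4m+1\mapsto|-(m+1)\downarrow\rangle$, $4m+2\mapsto|-(m+1)\uparrow\rangle$, $4m+3\mapsto|m\downarrow\rangle$ ($m\ge0$), and let $\mathbf U$ be $U$ in this order, viewed as a matrix of $2\times2$ blocks $(\mathbf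 U)_{j,k}$ (rows $2j,2j+1$, columns $2k,2k+1$). The associated orthogonality measure $\boldsymbol\mu$ is the unique $2\times2$ positive semidefinite matrix valued measure on $\mathbb T$ with $\int_{\mathbb T}z^n d\boldsymbol\mu(z)=(\mathbf U^n)_{0,0}$ for all $n\in\mathbb Z$; its moments are $\boldsymbol\mu_n=\int_{\mathbb T}z^nd\boldsymbol\mu$. Weak convergence: a sequence of (uniformly bounded) matrices $A_n$ converges weakly to $A$ if $(A_n)_{j,k}\to A_{j,k}$ for all indices $j,k$. *)

From HB Require Import structures.
From mathcomp Require Import all_boot all_order all_algebra.
From mathcomp Require Import complex zify.
From mathcomp Require Import reals trigo.
Set Implicit Arguments. Unset Strict Implicit. Unset Printing Implicit Defensive.
Import Order.TTheory GRing.Theory Num.Theory.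
Local Open Scope ring_scope.
Local Open Scope complex_scope.

Section QRW.
Variable R : realType.
Local Notation C := R[i].

Definition unitary (M : 'M[C]_2) : Prop := M *m (map_mx conjc M)^T = 1%:M.
(* non trivial coin: c_11 <> 0 (entries are 0-indexed in mathcomp) *)
Definition nontrivial (M : 'M[C]_2) : Prop := M 0 0 != 0.

Definition imx := nat -> nat -> C.

(* Product U * A of infinite matrices, where U is row-finite with
   U j l = 0 for l >= j + 5 (true for both transition matrices below),
   so that the infinite sum reduces to this finite one. *)
Definition rf_mul (U A : imx) : imx :=
  fun j k => \sum_(l < j + 5) U j l * A l k.

Fixpoint mpow (U : imx) (n : nat) : imx :=
  match n with
  | 0 => fun j k => (j == k)%:R
  | n'.+1 => rf_mul U (mpow U n')
  end.

(* spin: false = up, true = down; coin column index *)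
Definition sp (b : bool) : 'I_2 := if b then 1 else 0.

(* Case I = Z_{>=0}: |i up> = 2i, |i down> = 2i+1.
   |i s> -> c^i_{1s} |i+1 up> + c^i_{2s} |i-1 down>, with the reflection
   at 0: U_{0,0} = c^0_{21}, U_{1,0} = c^0_{22}. *)
Definition UN (c : nat -> 'M[C]_2) : imx :=
  fun j k =>
    let i := j./2 in let s := sp (odd j) in
    if k == (2 * i + 2)%N then c i 0 s
    else if (0 < i)%N && (k == (2 * i - 1)%N) then c i 1 s
    else if (i == 0)%N && (k == 0)%N then c 0%N 1 s
    else 0.

Definition muN (c : nat -> 'M[C]_2) (n : nat) : C := mpow (UN c) n 0 0.

Definition UZ (c : int -> 'M[C]_2) (x y : int * bool) : C :=
  if (y.1 == x.1 + 1) && (y.2 == false) then c x.1 0 (sp x.2)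
  else if (y.1 == x.1 - 1) && (y.2 == true) then c x.1 1 (sp x.2)
  else 0.

Definition fold (j : nat) : int * bool :=
  let m := (j %/ 4)%N in
  match (j %% 4)%N with
  | 0 => (Posz m, false)
  | 1 => (- Posz m.+1, true)
  | 2 => (- Posz m.+1, false)
  | _ => (Posz m, true)
  end.

Definition UZf (c : int -> 'M[C]_2) : imx := fun j k => UZ c (fold j) (fold k).

Definition muZ (c : int -> 'M[C]_2) (n : nat) : 'M[C]_2 :=
  \matrix_(a < 2, b < 2) mpow (UZf c) n a b.

Definition cvgC (u : nat -> C) (l : C) : Prop :=
  forall eps : R, 0 < eps -> exists N : nat, forall n : nat, (N <= n)%N ->
    `|u n - l| < eps%:C.

Definition weak_cvg (A : nat -> imx) (L : imx) : Prop :=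
  forall j k, cvgC (fun n => A n j k) (L j k).

Definition cvg_mx2 (M : nat -> 'M[C]_2) (L : 'M[C]_2) : Prop :=
  forall a b : 'I_2, cvgC (fun n => M n a b) (L a b).

Definition expi (t : R) : C := (cos t +i* sin t)%C.

End QRW.

(* Sanity checks: both transition matrices are row-finite with U j l = 0 for
   l >= j + 5, so rf_mul computes the genuine (infinite) matrix product. *)
Lemma UN_support (R : realType) (c : nat -> 'M[R[i]]_2) j k :
  (j + 5 <= k)%N -> UN c j k = 0.
Proof.
move=> hk; rewrite /UN.
have hj := odd_double_half j; rewrite -mul2n in hj.
have h1 : (k == 2 * j./2 + 2)%N = false by apply/eqP; lia.
have h2 : (k == 2 * j./2 - 1)%N = false by apply/eqP; lia.
have h3 : (k == 0)%N = false by apply/eqP; lia.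
by rewrite h1 h2 h3 andbF andbF.
Qed.
Lemma UZf_support (R : realType) (c : int -> 'M[R[i]]_2) j k :
  (j + 5 <= k)%N -> UZf c j k = 0.
Proof.
move=> hk; rewrite /UZf /UZ /fold.
have hj := divn_eq j 4; have hk4 := divn_eq k 4.
have hj4 := ltn_pmod j (isT : (0 < 4)%N); have hk44 := ltn_pmod k (isT : (0 < 4)%N).
move: (j %/ 4)%N (j %% 4)%N (k %/ 4)%N (k %% 4)%N hj hk4 hj4 hk44 => a r b s hj hk4 hr hs.
have : (a + 1 <= b)%N by lia.
move=> hab.
case: r hr hj => [|[|[|[|r]]]] // _ hj; case: s hs hk4 => [|[|[|[|s]]]] // _ hk4 /=;
  rewrite ?andbF ?andbT //;
  repeat (case: eqP => //=; try lia; intros); rewrite ?andbF //.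
Qed.

(* Call a set P of complex sequences shift-closed if it is a linear space that
   is stable under the shifts n |-> n+1 and n |-> n-1 and under changing
   finitely many terms.  Unitarity forces c_22 <> 0 besides c_11 <> 0, so in
   each of the recurrences (U^{n+1})_{jk} = sum_l U_{jl} (U^n)_{lk} and
   (U^{n+1})_{jk} = sum_l (U^n)_{jl} U_{lk}, which have two nonzero terms, one
   can solve for the entry at the next site.  Marching outwards from the
   (0,0) block, every entry sequence n |-> (U^n)_{jk} lies in each
   shift-closed P containing the moments.  Applied to
   {g | e^{-i theta_n} g_n -> 0} and, when e^{i(theta_{n+1} - theta_n)}
   converges (necessarily to a nonzero limit), to
   {g | e^{-i theta_n} g_n converges}, this gives the "if" directions.
   Conversely, a nonzero weak limit L has a nonzero entry in the (0,0) block
   (else the first space would force L = 0), and comparing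
   e^{-i theta_n} (U^{n+1})_{jk} -> sum_l U_{jl} L_{lk} with
   e^{-i theta_{n+1}} (U^{n+1})_{jk} -> L_{jk} <> 0 makes the phase ratios
   converge. *)
From HB Require Import structures.
From mathcomp Require Import all_boot all_order all_algebra.
From mathcomp Require Import complex.
From mathcomp Require Import boolp reals trigo.
From mathcomp Require Import ring lra zify.
Set Implicit Arguments. Unset Strict Implicit. Unset Printing Implicit Defensive.
Import Order.TTheory GRing.Theory Num.Theory.
Local Open Scope ring_scope.
Local Open Scope complex_scope.

(* The modulus as a real number ([`|z|] on [R[i]] is complex-valued). *)
Notation normR := Normc.normc.

Section Convergence.
Variable R : realType.
Local Notation C := R[i].
Implicit Types (u v r : nat -> C) (a b l : C).

Lemma normR_ge0 (z : C) : 0 <= normR z.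
Proof. by rewrite -lecR; exact: normr_ge0 z. Qed.

Lemma normR_eq0 (z : C) : (normR z == 0) = (z == 0).
Proof. by apply/eqP/eqP => [/Normc.eq0_normc | ->] //; rewrite Normc.normc0. Qed.

Definition tendsto u l :=
  forall e : R, 0 < e -> exists N, forall n, (N <= n)%N -> normR (u n - l) < e.

Lemma cvgCE u l : cvgC u l <-> tendsto u l.
Proof. by split=> h e /h [N hN]; exists N => n /hN; rewrite -ltcR. Qed.

Definition eventually_eq u v := exists N, forall n, (N <= n)%N -> u n = v n.

Lemma tendsto_eventually_eq u v l : eventually_eq u v -> tendsto u l -> tendsto v l.
Proof.
move=> [M huv] hu e /hu [N hN]; exists (maxn M N) => n hn.
by rewrite -huv ?hN //; lia.
Qed.

Lemma eq_tendsto u v l : u =1 v -> tendsto u l -> tendsto v l.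
Proof. by move=> huv; apply: tendsto_eventually_eq; exists 0%N. Qed.

Lemma tendsto_cst a : tendsto (fun=> a) a.
Proof. by move=> e e0; exists 0%N => n _; rewrite subrr Normc.normc0. Qed.

Lemma tendstoD u v a b :
  tendsto u a -> tendsto v b -> tendsto (fun n => u n + v n) (a + b).
Proof.
move=> hu hv e e0; have e2 : 0 < e / 2 by lra.
have [N1 h1] := hu _ e2; have [N2 h2] := hv _ e2; exists (maxn N1 N2) => n hn.
have -> : u n + v n - (a + b) = (u n - a) + (v n - b) by ring.
apply: le_lt_trans (le_normcD _ _) _.
have := h1 n ltac:(lia); have := h2 n ltac:(lia); lra.
Qed.

Lemma tendsto_subP u a : tendsto u a <-> tendsto (fun n => u n - a) 0.
Proof. by split=> h e /h [N hN]; exists N => n /hN; rewrite subr0. Qed.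

Definition ev_bounded u := exists N M, forall n, (N <= n)%N -> normR (u n) <= M.

Lemma tendsto_ev_bounded u a : tendsto u a -> ev_bounded u.
Proof.
move=> /(_ 1 ltr01) [N hN]; exists N, (normR a + 1) => n /hN h.
have := le_normcD (u n - a) a; rewrite subrK; lra.
Qed.

Lemma tendsto_bounded_mul0 r v :
  ev_bounded r -> tendsto v 0 -> tendsto (fun n => r n * v n) 0.
Proof.
move=> [N [M hM]] hv e e0.
have hM1 : 0 < `|M| + 1 by have := normr_ge0 M; lra.
have [N' hN'] := hv _ (divr_gt0 e0 hM1); exists (maxn N N') => n hn.
have := hN' n ltac:(lia); have hr := hM n ltac:(lia).
have := ler_norm M; rewrite !subr0 Normc.normcM => hMM hv'.
apply: le_lt_trans (_ : normR (r n) * normR (v n) <= (`|M| + 1) * normR (v n)) _.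
  by apply: ler_wpM2r; [exact: normR_ge0 | lra].
by rewrite mulrC -ltr_pdivlMr.
Qed.

Lemma tendstoMl k u a : tendsto u a -> tendsto (fun n => k * u n) (k * a).
Proof.
move=> /tendsto_subP hu; apply/tendsto_subP.
have hk : ev_bounded (fun=> k) by exists 0%N, (normR k).
by apply: eq_tendsto (tendsto_bounded_mul0 hk hu) => n; rewrite mulrBr.
Qed.

Lemma tendstoM u v a b :
  tendsto u a -> tendsto v b -> tendsto (fun n => u n * v n) (a * b).
Proof.
move=> hu hv; apply/tendsto_subP.
have h1 := tendsto_bounded_mul0 (tendsto_ev_bounded hu) (proj1 (tendsto_subP v b) hv).
have h2 := tendstoMl b (proj1 (tendsto_subP u a) hu).
have := tendstoD h1 h2; rewrite mulr0 addr0.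
by apply: eq_tendsto => n /=; ring.
Qed.

Lemma tendstoV v b : b != 0 -> tendsto v b -> tendsto (fun n => (v n)^-1) b^-1.
Proof.
move=> b0 hv; have nb : 0 < normR b by rewrite lt_def normR_eq0 b0 normR_ge0.
have [N hN] : exists N, forall n, (N <= n)%N -> normR (v n - b) < normR b / 2.
  by apply: hv; lra.
have v_large n : (N <= n)%N -> normR b / 2 <= normR (v n).
  move=> /hN; have := le_normcD (v n) (b - v n).
  have -> : v n + (b - v n) = b by ring.
  by rewrite -(normcN (b - v n)) opprB; lra.
have v_neq0 n : (N <= n)%N -> v n != 0.
  by move=> /v_large; rewrite -normR_eq0; apply: contraTneq => ->; lra.
have r_bounded : ev_bounded (fun n => (v n)^-1 * b^-1).
  exists N, ((normR b / 2)^-1 * (normR b)^-1) => n /v_large hn.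
  rewrite Normc.normcM !Normc.normcV ler_wpM2r ?invr_ge0 ?normR_ge0 //.
  by rewrite lef_pV2 // posrE; lra.
have hbv : tendsto (fun n => b - v n) 0.
  have := tendstoMl (-1) (proj1 (tendsto_subP v b) hv); rewrite mulr0.
  by apply: eq_tendsto => n /=; ring.
apply/tendsto_subP/(tendsto_eventually_eq _ (tendsto_bounded_mul0 r_bounded hbv)).
by exists N => n /v_neq0 vn0; field; rewrite b0 vn0.
Qed.

Lemma tendsto_ratio u v r a b : b != 0 -> tendsto u a -> tendsto v b ->
  (forall n, u n = r n * v n) -> tendsto r (a / b).
Proof.
move=> b0 hu hv urv; have nb : 0 < normR b by rewrite lt_def normR_eq0 b0 normR_ge0.
have [N hN] := hv _ nb.
apply: tendsto_eventually_eq (tendstoM hu (tendstoV b0 hv)); exists N => n /hN vn.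
have vn0 : v n != 0 by apply: contraTneq vn => ->; rewrite sub0r normcN ltxx.
by rewrite urv mulfK.
Qed.

Lemma tendsto_shift u l : tendsto u l -> tendsto (fun n => u n.+1) l.
Proof. by move=> h e /h [N hN]; exists N => n hn; apply: hN; lia. Qed.

Lemma tendsto_pred u l : tendsto u l -> tendsto (fun n => u n.-1) l.
Proof. by move=> h e /h [N hN]; exists N.+1 => n hn; apply: hN; lia. Qed.

Lemma tendsto_unique u a b : tendsto u a -> tendsto u b -> a = b.
Proof.
move=> ha hb; apply/eqP; rewrite -subr_eq0 -normR_eq0 eq_le normR_ge0 andbT.
apply/ler_addgt0Pr => e e0; rewrite add0r; have e2 : 0 < e / 2 by lra.
have [N1 h1] := ha _ e2; have [N2 h2] := hb _ e2; set m := maxn N1 N2.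
have := h1 m ltac:(lia); have := h2 m ltac:(lia).
have := le_normcD (a - u m) (u m - b).
by rewrite addrA subrK -(normcN (a - u m)) opprB; lra.
Qed.

Lemma tendsto_sum N (u : 'I_N -> nat -> C) (a : 'I_N -> C) :
  (forall i, tendsto (u i) (a i)) ->
  tendsto (fun n => \sum_(i < N) u i n) (\sum_(i < N) a i).
Proof.
elim: N u a => [|N IH] u a h.
  by rewrite big_ord0; apply: eq_tendsto (tendsto_cst 0) => n; rewrite big_ord0.
rewrite big_ord_recr; apply: eq_tendsto (tendstoD (IH _ _ (fun i => h _)) (h ord_max)).
by move=> n; rewrite big_ord_recr.
Qed.

Lemma tendsto_unit_neq0 u l : (forall n, normR (u n) = 1) -> tendsto u l -> l != 0.
Proof.
move=> u1 /(_ 1 ltr01) [N /(_ N (leqnn N))].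
by apply: contraTneq => ->; rewrite subr0 u1 ltxx.
Qed.

End Convergence.

Section ShiftClosed.
Variable R : realType.
Local Notation C := R[i].

Definition shift_closed (P : (nat -> C) -> Prop) :=
  [/\ forall g h a b, P g -> P h -> P (fun n => a * g n + b * h n),
      forall g, P g -> P (fun n => g n.+1),
      forall g, P g -> P (fun n => g n.-1) &
      forall g h, eventually_eq g h -> P g -> P h].

Variable P : (nat -> C) -> Prop.
Hypothesis P_closed : shift_closed P.
Variables (X Y Z : nat -> C) (a b : C).
Hypothesis XYZ : forall n, X n.+1 = a * Y n + b * Z n.

Lemma shift_closed_next : P Y -> P Z -> P X.
Proof.
case: P_closed => lin _ back ev hY hZ.
apply: ev (back _ (lin _ _ a b hY hZ)); exists 1%N => n hn.
by rewrite -XYZ prednK.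
Qed.

Lemma shift_closed_solver : b != 0 -> P X -> P Y -> P Z.
Proof.
case: P_closed => lin fwd _ ev b0 hX hY.
apply: ev (lin _ _ b^-1 (- (a / b)) (fwd _ hX) hY); exists 0%N => n _.
by rewrite XYZ; field.
Qed.

Lemma shift_closed_solvel : a != 0 -> P X -> P Z -> P Y.
Proof.
case: P_closed => lin fwd _ ev a0 hX hZ.
apply: ev (lin _ _ a^-1 (- (b / a)) (fwd _ hX) hZ); exists 0%N => n _.
by rewrite XYZ; field.
Qed.

End ShiftClosed.

Section WeightedSpaces.
Variable R : realType.
Local Notation C := R[i].
Variable al : nat -> C.
Hypothesis al_unit : forall n, normR (al n) = 1.

Lemma al_neq0 n : al n != 0.
Proof. by rewrite -normR_eq0 al_unit oner_eq0. Qed.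

Lemma normR_al_ratio m n : normR (al m / al n) = 1.
Proof. by rewrite Normc.normcM Normc.normcV !al_unit invr1 mulr1. Qed.

Definition weighted_null g := tendsto (fun n => al n * g n) 0.

Lemma shift_closed_weighted_null : shift_closed weighted_null.
Proof.
have ratio_bounded (s : nat -> nat) : ev_bounded (fun n => al n / al (s n)).
  by exists 0%N, 1 => n _; rewrite normR_al_ratio.
split.
- move=> g h a b hg hh; have := tendstoD (tendstoMl a hg) (tendstoMl b hh).
  by rewrite !mulr0 addr0; apply: eq_tendsto => n; ring.
- move=> g /tendsto_shift/(tendsto_bounded_mul0 (ratio_bounded S)).
  by apply: eq_tendsto => n; rewrite mulrA divfK ?al_neq0.
- move=> g /tendsto_pred/(tendsto_bounded_mul0 (ratio_bounded predn)).
  by apply: eq_tendsto => n; rewrite mulrA divfK ?al_neq0.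
- by move=> g h [N gh]; apply: tendsto_eventually_eq; exists N => n /gh ->.
Qed.

Variable w : C.
Hypothesis al_ratio : tendsto (fun n => al n / al n.+1) w.

Definition weighted_cvg g := exists l, tendsto (fun n => al n * g n) l.

Lemma shift_closed_weighted_cvg : shift_closed weighted_cvg.
Proof.
have w_neq0 : w != 0 := tendsto_unit_neq0 (fun n => normR_al_ratio n n.+1) al_ratio.
split.
- move=> g h a b [l1 hg] [l2 hh]; exists (a * l1 + b * l2).
  by apply: eq_tendsto (tendstoD (tendstoMl a hg) (tendstoMl b hh)) => n; ring.
- move=> g [l /tendsto_shift/(tendstoM al_ratio) hg]; exists (w * l).
  by apply: eq_tendsto hg => n; rewrite mulrA divfK ?al_neq0.
- move=> g [l /tendsto_pred hg]; exists (w^-1 * l).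
  have := tendstoM (tendstoV w_neq0 (tendsto_pred al_ratio)) hg.
  apply: tendsto_eventually_eq; exists 1%N => n n1.
  by rewrite prednK // invf_div mulrA divfK ?al_neq0.
- move=> g h gh [l hg]; exists l; apply: tendsto_eventually_eq hg.
  by case: gh => N gh; exists N => n /gh ->.
Qed.

End WeightedSpaces.

Section BandMatrices.
Variable R : realType.
Local Notation C := R[i].

Lemma sum_ord_two N (F : nat -> C) a b : a != b -> (a < N)%N -> (b < N)%N ->
  (forall l, l != a -> l != b -> F l = 0) -> \sum_(l < N) F l = F a + F b.
Proof.
move=> ab aN bN F0; rewrite (bigD1 (Ordinal aN)) //= (bigD1 (Ordinal bN)) /=; last first.
  by rewrite -val_eqE /= eq_sym.
rewrite big1 ?addr0 // => l /andP[la lb]; apply: F0; [move: lb | move: la];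
  by rewrite -val_eqE.
Qed.

Lemma sum_ord_one N (F : nat -> C) a : (a < N)%N ->
  (forall l, l != a -> F l = 0) -> \sum_(l < N) F l = F a.
Proof.
move=> aN F0; rewrite (bigD1 (Ordinal aN)) //= big1 ?addr0 // => l la.
by apply: F0; move: la; rewrite -val_eqE.
Qed.

Variable U : imx R.
Hypothesis U_row_band : forall j k, (j + 5 <= k)%N -> U j k = 0.
Hypothesis U_col_band : forall j k, (k + 5 <= j)%N -> U j k = 0.

Lemma mpow1 j k : mpow U 1 j k = U j k.
Proof.
rewrite /= /rf_mul; have [kj|jk] := ltnP k (j + 5).
  rewrite (@sum_ord_one _ (fun l => U j l * (l == k)%:R) k) ?eqxx ?mulr1 //.
  by move=> l /negbTE ->; rewrite mulr0.
rewrite U_row_band // big1 // => l _.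
suff /negbTE -> : nat_of_ord l != k by rewrite mulr0.
by apply/eqP => lk; have := ltn_ord l; lia.
Qed.

Lemma mpowSr n j k : mpow U n.+1 j k = \sum_(m < k + 5) mpow U n j m * U m k.
Proof.
elim: n j k => [|n IH] j k.
  rewrite mpow1; have [jk|kj] := ltnP j (k + 5).
    rewrite (@sum_ord_one _ (fun m => (j == m)%:R * U m k) j) ?eqxx ?mul1r //.
    by move=> m mj; rewrite eq_sym (negbTE mj) mul0r.
  rewrite U_col_band // big1 // => m _ /=.
  suff /negbTE -> : j != nat_of_ord m by rewrite mul0r.
  by apply/eqP => jm; have := ltn_ord m; lia.
rewrite -[LHS]/(rf_mul U (mpow U n.+1) j k) /rf_mul.
under eq_bigr => l _ do rewrite IH mulr_sumr.
rewrite exchange_big /=; apply: eq_bigr => m _.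
by rewrite /rf_mul mulr_suml; apply: eq_bigr => l _; rewrite mulrA.
Qed.

End BandMatrices.

Section Generation.
Variable R : realType.
Local Notation C := R[i].
Variable U : imx R.
Variables (B : Type) (bj bk : B -> nat).

Definition generated_by :=
  forall P : (nat -> C) -> Prop, shift_closed P ->
    (forall b, P (fun n => mpow U n (bj b) (bk b))) ->
    forall j k, P (fun n => mpow U n j k).

Hypothesis U_gen : generated_by.

Lemma generated_weak_cvg0 :
  weak_cvg (mpow U) (fun _ _ => 0) <->
  forall b, tendsto (fun n => mpow U n (bj b) (bk b)) 0.
Proof.
split=> [h b | h j k]; first exact/cvgCE/h.
have one_unit (n : nat) : normR ((fun=> 1 : C) n) = 1 by exact: Normc.normc1.
have base b : weighted_null (fun=> 1) (fun n => mpow U n (bj b) (bk b)).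
  by apply: eq_tendsto (h b) => n; rewrite mul1r.
apply/cvgCE/(eq_tendsto _ (U_gen (shift_closed_weighted_null one_unit) base j k)).
by move=> n; rewrite mul1r.
Qed.

Lemma generated_weak_limit (al : nat -> C) : (forall n, normR (al n) = 1) ->
  (exists L : imx R,
     weak_cvg (fun n j k => al n * mpow U n j k) L /\ exists j k, L j k != 0)
  <->
  ((exists l : B -> C,
      (forall b, tendsto (fun n => al n * mpow U n (bj b) (bk b)) (l b))
      /\ exists b, l b != 0)
   /\ exists w, tendsto (fun n => al n / al n.+1) w).
Proof.
move=> al_unit; split.
  move=> [L [hL [j0 [k0 L0]]]].
  have {}hL j k : tendsto (fun n => al n * mpow U n j k) (L j k) by exact/cvgCE/hL.
  split.
    exists (fun b => L (bj b) (bk b)); split=> //.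
    apply: contrapT => /forallNP base0; move/eqP: L0; apply.
    apply: tendsto_unique (hL j0 k0) _.
    apply: (U_gen (shift_closed_weighted_null al_unit)) => b.
    have [] := (hL (bj b) (bk b), base0 b).
    by case: eqP => [-> + _ | _ _ []].
  have next : tendsto (fun n => al n * mpow U n.+1 j0 k0)
                      (\sum_(l < j0 + 5) U j0 l * L l k0).
    apply: eq_tendsto (tendsto_sum (fun l : 'I_(j0 + 5) => tendstoMl (U j0 l) (hL l k0))).
    by move=> n; rewrite /= /rf_mul mulr_sumr; apply: eq_bigr => l _; ring.
  eexists; apply: tendsto_ratio L0 next (tendsto_shift (hL j0 k0)) _ => n.
  by rewrite mulrA divfK ?(al_neq0 al_unit).
move=> [[l [hl [b0 lb0]]] [w hw]].
have hc := U_gen (shift_closed_weighted_cvg al_unit hw) (fun b => ex_intro _ (l b) (hl b)).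
pose L j k := proj1_sig (cid (hc j k)).
have hL j k : tendsto (fun n => al n * mpow U n j k) (L j k) := proj2_sig (cid (hc j k)).
exists L; split; first by move=> j k; exact/cvgCE/hL.
by exists (bj b0), (bk b0); rewrite (tendsto_unique (hL _ _) (hl b0)).
Qed.

End Generation.

Lemma unitary_coef11_neq0 (R : realType) (M : 'M[R[i]]_2) :
  unitary M -> nontrivial M -> M 1 1 != 0.
Proof.
rewrite /unitary /nontrivial => MU M00; apply/negP => /eqP M11.
have := congr1 (fun A : 'M_2 => A 0 1) MU; have := congr1 (fun A : 'M_2 => A 1 1) MU.
rewrite !mxE !big_ord_recr !big_ord0 /= !mxE !add0r.
have -> : widen_ord (leqnSn 1) ord_max = 0 :> 'I_2 by exact: val_inj.
have -> : ord_max = 1 :> 'I_2 by exact: val_inj.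
rewrite M11 conjc0 !mulr0 !addr0 => M10 /eqP.
rewrite mulf_eq0 conjc_eq0 (negbTE M00) /= => /eqP M10'.
by move: M10; rewrite M10' mul0r => /eqP; rewrite eq_sym oner_eq0.
Qed.

Section HalfLine.
Variable R : realType.
Local Notation C := R[i].
Variable c : nat -> 'M[C]_2.

(* The truncated subtraction makes [downN 0 = 0 = |0 up>], the state onto
   which the reflecting coin at the origin sends [|0 s>]. *)
Definition downN (i : nat) : nat := (2 * i - 1)%N.

Lemma UN_row (i : nat) (s : bool) l :
  UN c (2 * i + s)%N l =
  if l == (2 * i + 2)%N then c i 0 (sp s) else if l == downN i then c i 1 (sp s) else 0.
Proof.
rewrite /UN (_ : (2 * i + s)./2 = i)%N; last by rewrite addnC mul2n half_bit_double.
rewrite (_ : odd (2 * i + s) = s); last by rewrite oddD oddM; case: s.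
by rewrite /downN; case: i => [|i] /=; repeat (case: eqP => //= ?); lia.
Qed.

Lemma UN_col_band j k : (k + 5 <= j)%N -> UN c j k = 0.
Proof.
move=> kj; have jE := odd_double_half j; rewrite -mul2n addnC in jE.
have := leq_b1 (odd j); rewrite -jE UN_row /downN.
by repeat (case: eqP => //= ?); lia.
Qed.

Lemma UN_col (i : nat) (t : bool) m :
  UN c m (if t then downN i else 2 * i + 2)%N =
  if m == (2 * i)%N then c i (sp t) 0 else if m == (2 * i + 1)%N then c i (sp t) 1 else 0.
Proof.
have mE := odd_double_half m; rewrite -mul2n addnC in mE.
have := leq_b1 (odd m); rewrite -mE UN_row /downN.
case: t; case: (odd m) => /= _; repeat (case: eqP => //= ?); try lia;
  congr (c _ _ _); lia.
Qed.

Local Notation entry j k := (fun n => mpow (UN c) n j k).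

Lemma mpowSN_row (i : nat) (s : bool) k n :
  mpow (UN c) n.+1 (2 * i + s)%N k =
  c i 0 (sp s) * mpow (UN c) n (2 * i + 2)%N k + c i 1 (sp s) * mpow (UN c) n (downN i) k.
Proof.
rewrite /= /rf_mul (@sum_ord_two _ _ (fun l => UN c (2 * i + s)%N l * mpow (UN c) n l k)
  (2 * i + 2)%N (downN i)) /downN; try by case: s; lia.
- by rewrite !UN_row eqxx ifN_eq ?eqxx //; lia.
- by move=> l /negbTE l1 /negbTE l2; rewrite UN_row /downN l1 l2 mul0r.
Qed.

Lemma mpowSN_col (i : nat) (t : bool) j n :
  mpow (UN c) n.+1 j (if t then downN i else 2 * i + 2)%N =
  c i (sp t) 0 * mpow (UN c) n j (2 * i)%N + c i (sp t) 1 * mpow (UN c) n j (2 * i + 1)%N.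
Proof.
rewrite (mpowSr (@UN_support R c) UN_col_band).
rewrite (@sum_ord_two _ _ (fun m => mpow (UN c) n j m * UN c m _) (2 * i)%N (2 * i + 1)%N);
  try by rewrite /downN; case: t; lia.
- by rewrite !UN_col eqxx ifN_eq ?eqxx 1?mulrC 1?[_ * c _ _ _]mulrC //; lia.
- by move=> m /negbTE m1 /negbTE m2; rewrite UN_col m1 m2 mulr0.
Qed.

Hypothesis c00 : forall i, c i 0 0 != 0.
Hypothesis c11 : forall i, c i 1 1 != 0.

Section Closure.
Variable P : (nat -> C) -> Prop.
Hypothesis P_closed : shift_closed P.

Lemma UN_generated_col j : P (entry j 0) -> forall k, P (entry j k).
Proof.
move=> P0.
have cols i : P (entry j (2 * i)%N) /\ P (entry j (2 * i + 1)%N).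
  elim: i => [|i [Pe Po]].
    split=> //.
    exact: (shift_closed_solver (X := entry j 0) P_closed (mpowSN_col 0 true j) (c11 0) P0 P0).
  have Pe' : P (entry j (2 * i.+1)%N).
    rewrite (_ : 2 * i.+1 = 2 * i + 2)%N; last lia.
    exact: (shift_closed_next (X := entry j (2 * i + 2)%N) P_closed (mpowSN_col i false j) Pe Po).
  split=> //; have := mpowSN_col i.+1 true j; rewrite /downN /=.
  rewrite (_ : 2 * i.+1 - 1 = 2 * i + 1)%N; last lia.
  by move/(shift_closed_solver (X := entry j (2 * i + 1)%N) P_closed); apply.
move=> k; rewrite -[k]odd_double_half -mul2n addnC.
by have [] := cols k./2; case: (odd k); rewrite ?addn0.
Qed.

Lemma UN_generated_row k : P (entry 0 k) -> forall j, P (entry j k).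
Proof.
move=> P0.
have rows i : P (entry (2 * i + 1)%N k) /\ P (entry (2 * i + 2)%N k).
  elim: i => [|i [Po Pe]].
    have P2 := shift_closed_solvel (X := entry 0 k) P_closed (mpowSN_row 0 false k) (c00 0) P0 P0.
    split=> //.
    exact: (shift_closed_next (X := entry 1 k) P_closed (mpowSN_row 0 true k) P2 P0).
  have E (s : bool) n : mpow (UN c) n.+1 (2 * i + 2 + s)%N k =
      c i.+1 0 (sp s) * mpow (UN c) n (2 * i + 4)%N k +
      c i.+1 1 (sp s) * mpow (UN c) n (2 * i + 1)%N k.
    have -> : (2 * i + 2 + s = 2 * i.+1 + s)%N by lia.
    have -> : (2 * i + 4 = 2 * i.+1 + 2)%N by lia.
    have -> : (2 * i + 1)%N = downN i.+1 by rewrite /downN; lia.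
    exact: mpowSN_row.
  have E0 := E false; rewrite addn0 in E0.
  have Pe' := shift_closed_solvel (X := entry (2 * i + 2)%N k) P_closed E0 (c00 _) Pe Po.
  have Po' := shift_closed_next (X := entry (2 * i + 2 + true)%N k) P_closed (E true) Pe' Po.
  have -> : (2 * i.+1 + 1 = 2 * i + 2 + true)%N by lia.
  by have -> : (2 * i.+1 + 2 = 2 * i + 4)%N by lia.
case=> // j; rewrite -[j]odd_double_half -mul2n addnC.
have [Po Pe] := rows j./2; case: (odd j).
- by rewrite (_ : (2 * j./2 + true).+1 = 2 * j./2 + 2)%N; last lia.
- by rewrite (_ : (2 * j./2 + false).+1 = 2 * j./2 + 1)%N; last lia.
Qed.

End Closure.

Lemma UN_generated : generated_by (UN c) (fun _ : unit => 0%N) (fun _ => 0%N).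
Proof.
move=> P P_closed /(_ tt) P0 j k.
by apply: UN_generated_row => //; exact: UN_generated_col.
Qed.

End HalfLine.

Definition fold_inv (x : int * bool) : nat :=
  if (0 <= x.1)%R then (4 * `|x.1| + (if x.2 then 3 else 0))%N
  else (4 * (`|x.1| - 1) + (if x.2 then 1 else 2))%N.

Lemma fold_invK : cancel fold_inv fold.
Proof.
have divmod4 q r : (r < 4)%N -> ((4 * q + r) %/ 4 = q)%N /\ ((4 * q + r) %% 4 = r)%N.
  by move=> r4; rewrite mulnC divnMDl // modnMDl divn_small // modn_small // addn0.
case=> i s; rewrite /fold_inv /fold /=; case: ifP => i0.
  have iE : i = Posz `|i| by lia.
  by case: s; [have [-> ->] := divmod4 `|i|%N 3%N isT | have [-> ->] := divmod4 `|i|%N 0%N isT];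
    rewrite -iE.
have iE : i = - Posz (`|i| - 1).+1 by lia.
by case: s; [have [-> ->] := divmod4 (`|i| - 1)%N 1%N isT
            | have [-> ->] := divmod4 (`|i| - 1)%N 2%N isT]; rewrite -iE.
Qed.

Lemma foldK : cancel fold fold_inv.
Proof.
move=> j; rewrite /fold; have := divn_eq j 4; have := ltn_pmod j (isT : (0 < 4)%N).
move: (j %/ 4)%N (j %% 4)%N => q r r4 jE.
by case: r r4 jE => [|[|[|[|r]]]] //= _ jE; rewrite /fold_inv /=; lia.
Qed.

Lemma fold_inv_inj : injective fold_inv.
Proof. exact: can_inj fold_invK. Qed.

Lemma fold_inv_up_lt (i : int) s : (fold_inv ((i + 1)%R, false) < fold_inv (i, s) + 5)%N.
Proof. by rewrite /fold_inv /=; case: s; case: ifP; case: ifP; lia. Qed.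

Lemma fold_inv_down_lt (i : int) s : (fold_inv ((i - 1)%R, true) < fold_inv (i, s) + 5)%N.
Proof. by rewrite /fold_inv /=; case: s; case: ifP; case: ifP; lia. Qed.

Lemma fold_inv_lt_up (i : int) s : (fold_inv (i, s) < fold_inv ((i + 1)%R, false) + 5)%N.
Proof. by rewrite /fold_inv /=; case: s; case: ifP; case: ifP; lia. Qed.

Lemma fold_inv_lt_down (i : int) s : (fold_inv (i, s) < fold_inv ((i - 1)%R, true) + 5)%N.
Proof. by rewrite /fold_inv /=; case: s; case: ifP; case: ifP; lia. Qed.

Lemma int_ind_succ_pred (Q : int -> Prop) : Q 0 -> (forall i, Q i -> Q (i + 1)) ->
  (forall i, Q i -> Q (i - 1)) -> forall i, Q i.
Proof.
move=> Q0 Qup Qdown [m|m]; elim: m => [|m IH] //.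
- by rewrite (_ : Posz m.+1 = Posz m + 1); [exact: Qup | lia].
- by rewrite (_ : Negz 0 = 0 - 1); [exact: Qdown | lia].
- by rewrite (_ : Negz m.+1 = Negz m - 1); [exact: Qdown | lia].
Qed.

Section Line.
Variable R : realType.
Local Notation C := R[i].
Variable c : int -> 'M[C]_2.

Lemma UZ_row (i : int) (s : bool) y :
  UZ c (i, s) y = if y == (i + 1, false) then c i 0 (sp s)
                  else if y == (i - 1, true) then c i 1 (sp s) else 0.
Proof.
case: y => j t; rewrite /UZ /= !xpair_eqE.
by case: eqP => //= ?; case: eqP => //= ?; case: t => //=; lia.
Qed.

Lemma UZf_col_band j k : (k + 5 <= j)%N -> UZf c j k = 0.
Proof.
rewrite /UZf -[j]foldK; case: (fold j) => i s; rewrite fold_invK UZ_row => kj.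
case: eqP => [kE|_]; first by have := fold_inv_lt_up i s; rewrite -kE foldK; lia.
case: eqP => [kE|_] //; by have := fold_inv_lt_down i s; rewrite -kE foldK; lia.
Qed.

Local Notation entryZ x y := (fun n => mpow (UZf c) n (fold_inv x) (fold_inv y)).

Lemma mpowSZ_row (i : int) (s : bool) y n :
  mpow (UZf c) n.+1 (fold_inv (i, s)) (fold_inv y) =
  c i 0 (sp s) * mpow (UZf c) n (fold_inv (i + 1, false)) (fold_inv y) +
  c i 1 (sp s) * mpow (UZf c) n (fold_inv (i - 1, true)) (fold_inv y).
Proof.
rewrite /= /rf_mul /UZf fold_invK (@sum_ord_two _ _
  (fun l => UZ c (i, s) (fold l) * mpow (UZf c) n l (fold_inv y))
  (fold_inv (i + 1, false)) (fold_inv (i - 1, true))).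
- by rewrite !fold_invK !UZ_row eqxx ifN_eq ?eqxx // xpair_eqE andbF.
- by apply/eqP => /fold_inv_inj [].
- exact: fold_inv_up_lt.
- exact: fold_inv_down_lt.
- move=> l l1 l2; rewrite UZ_row.
  case: eqP => [lE|_]; first by move: l1; rewrite -lE foldK eqxx.
  case: eqP => [lE|_]; first by move: l2; rewrite -lE foldK eqxx.
  by rewrite mul0r.
Qed.

Lemma mpowSZ_col_up x (j : int) n :
  mpow (UZf c) n.+1 (fold_inv x) (fold_inv (j, false)) =
  c (j - 1) 0 0 * mpow (UZf c) n (fold_inv x) (fold_inv (j - 1, false)) +
  c (j - 1) 0 1 * mpow (UZf c) n (fold_inv x) (fold_inv (j - 1, true)).
Proof.
rewrite (mpowSr (@UZf_support R c) UZf_col_band) /UZf fold_invK (@sum_ord_two _ _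
  (fun m => mpow (UZf c) n (fold_inv x) m * UZ c (fold m) (j, false))
  (fold_inv (j - 1, false)) (fold_inv (j - 1, true))).
- by rewrite !fold_invK !UZ_row !xpair_eqE subrK !eqxx /= mulrC [X in _ + X]mulrC.
- by apply/eqP => /fold_inv_inj [].
- by have := fold_inv_lt_up (j - 1) false; rewrite subrK.
- by have := fold_inv_lt_up (j - 1) true; rewrite subrK.
- move=> m m1 m2; rewrite -[m]foldK in m1 m2 *; case: (fold m) m1 m2 => i s m1 m2.
  rewrite fold_invK UZ_row !xpair_eqE andbT andbF.
  case: eqP => [ij|_]; last by rewrite mulr0.
  have iE : i = j - 1 by rewrite ij addrK.
  by case: s m1 m2; rewrite iE eqxx.
Qed.

Lemma mpowSZ_col_down x (j : int) n :
  mpow (UZf c) n.+1 (fold_inv x) (fold_inv (j, true)) =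
  c (j + 1) 1 0 * mpow (UZf c) n (fold_inv x) (fold_inv (j + 1, false)) +
  c (j + 1) 1 1 * mpow (UZf c) n (fold_inv x) (fold_inv (j + 1, true)).
Proof.
rewrite (mpowSr (@UZf_support R c) UZf_col_band) /UZf fold_invK (@sum_ord_two _ _
  (fun m => mpow (UZf c) n (fold_inv x) m * UZ c (fold m) (j, true))
  (fold_inv (j + 1, false)) (fold_inv (j + 1, true))).
- by rewrite !fold_invK !UZ_row !xpair_eqE addrK !eqxx /= !andbF /= mulrC [X in _ + X]mulrC.
- by apply/eqP => /fold_inv_inj [].
- by have := fold_inv_lt_down (j + 1) false; rewrite addrK.
- by have := fold_inv_lt_down (j + 1) true; rewrite addrK.
- move=> m m1 m2; rewrite -[m]foldK in m1 m2 *; case: (fold m) m1 m2 => i s m1 m2.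
  rewrite fold_invK UZ_row !xpair_eqE andbT andbF /=.
  case: eqP => [ij|_]; last by rewrite mulr0.
  have iE : i = j + 1 by rewrite ij subrK.
  by case: s m1 m2; rewrite iE eqxx.
Qed.

Hypothesis c00 : forall i, c i 0 0 != 0.
Hypothesis c11 : forall i, c i 1 1 != 0.

Section Closure.
Variable P : (nat -> C) -> Prop.
Hypothesis P_closed : shift_closed P.

Lemma UZf_generated_row y : P (entryZ (0, false) y) -> P (entryZ (0 - 1, true) y) ->
  forall x, P (entryZ x y).
Proof.
move=> P0 P1.
have sites : forall i, P (entryZ (i, false) y) /\ P (entryZ (i - 1, true) y).
  apply: int_ind_succ_pred => // i [Pu Pd].
  - have Pu' := shift_closed_solvel (Y := entryZ (i + 1, false) y) P_closed
      (mpowSZ_row i false y) (c00 i) Pu Pd.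
    have Pd' := shift_closed_next (X := entryZ (i, true) y) P_closed
      (mpowSZ_row i true y) Pu' Pd.
    by rewrite addrK.
  - have E := mpowSZ_row (i - 1) true y; rewrite subrK in E.
    have Pd' := shift_closed_solver (Z := entryZ (i - 1 - 1, true) y) P_closed
      E (c11 (i - 1)) Pd Pu.
    have E' := mpowSZ_row (i - 1) false y; rewrite subrK in E'.
    by have := shift_closed_next (X := entryZ (i - 1, false) y) P_closed E' Pu Pd'.
case=> i [].
  by have [_] := sites (i + 1); rewrite addrK.
by have [] := sites i.
Qed.

Lemma UZf_generated_col x : P (entryZ x (0, false)) -> P (entryZ x (0 - 1, true)) ->
  forall y, P (entryZ x y).
Proof.
move=> P0 P1.
have sites : forall i, P (entryZ x (i, false)) /\ P (entryZ x (i - 1, true)).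
  apply: int_ind_succ_pred => // i [Pu Pd].
  - have E := mpowSZ_col_down x (i - 1); rewrite subrK in E.
    have Pd' := shift_closed_solver (Z := entryZ x (i, true)) P_closed E (c11 i) Pd Pu.
    have E' := mpowSZ_col_up x (i + 1); rewrite addrK in E'.
    have Pu' := shift_closed_next (X := entryZ x (i + 1, false)) P_closed E' Pu Pd'.
    by rewrite addrK.
  - have Pu' := shift_closed_solvel (Y := entryZ x (i - 1, false)) P_closed
      (mpowSZ_col_up x i) (c00 (i - 1)) Pu Pd.
    have E := mpowSZ_col_down x (i - 1 - 1); rewrite subrK in E.
    by have := shift_closed_next (X := entryZ x (i - 1 - 1, true)) P_closed E Pu' Pd.
case=> i [].
  by have [_] := sites (i + 1); rewrite addrK.
by have [] := sites i.
Qed.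

End Closure.

Lemma UZf_generated :
  generated_by (UZf c) (fun b : 'I_2 * 'I_2 => nat_of_ord b.1) (fun b => nat_of_ord b.2).
Proof.
move=> P P_closed base j k.
have entry00 : P (entryZ (0, false) (0, false)) := base (0, 0).
have entry01 : P (entryZ (0, false) (0 - 1, true)) := base (0, 1).
have entry10 : P (entryZ (0 - 1, true) (0, false)) := base (1, 0).
have entry11 : P (entryZ (0 - 1, true) (0 - 1, true)) := base (1, 1).
rewrite -(foldK j) -(foldK k).
by apply: (UZf_generated_row P_closed); apply: (UZf_generated_col P_closed).
Qed.

End Line.

Section Exponential.
Variable R : realType.

Lemma expiD (s t : R) : expi s * expi t = expi (s + t).
Proof. by rewrite /expi; simpc; rewrite cosD sinD; congr (_ +i* _); ring. Qed.

Lemma normR_expi (t : R) : normR (expi t) = 1.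
Proof. by rewrite /= cos2Dsin2 sqrtr1. Qed.

Lemma expi_ratio (th : nat -> R) n :
  expi (- th n) / expi (- th n.+1) = expi (th n.+1 - th n).
Proof.
apply: (canLR (mulfK _)); first by rewrite -normR_eq0 normR_expi oner_eq0.
by rewrite expiD; congr expi; ring.
Qed.

End Exponential.

Section Moments.
Variable R : realType.
Local Notation C := R[i].

Lemma phase_ratio_cvgE (th : nat -> R) w :
  tendsto (fun n => expi (- th n) / expi (- th n.+1)) w <->
  cvgC (fun n => expi (th n.+1 - th n)) w.
Proof.
have -> : (fun n => expi (- th n) / expi (- th n.+1)) = (fun n => expi (th n.+1 - th n)).
  by apply/funext => n; exact: expi_ratio.
by split=> /cvgCE.
Qed.

Lemma qrw_half_line_moments (c : nat -> 'M[C]_2) :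
  (forall i, unitary (c i)) -> (forall i, nontrivial (c i)) ->
  (weak_cvg (fun n => mpow (UN c) n) (fun _ _ => 0) <-> cvgC (muN c) 0) /\
  (forall theta : nat -> R,
    (exists L : imx R,
       weak_cvg (fun n j k => expi (- theta n) * mpow (UN c) n j k) L
       /\ exists j k, L j k != 0)
    <->
    ((exists l : C, cvgC (fun n => expi (- theta n) * muN c n) l /\ l != 0)
     /\ exists w : C, cvgC (fun n => expi (theta n.+1 - theta n)) w)).
Proof.
move=> c_unitary c_nontrivial.
have gen := UN_generated c_nontrivial (fun i => unitary_coef11_neq0 (c_unitary i) (c_nontrivial i)).
split=> [|th].
  split=> [/(generated_weak_cvg0 gen) mu0 | mu0]; first exact/cvgCE/(mu0 tt).
  by apply/(generated_weak_cvg0 gen) => _; exact/cvgCE.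
apply: iff_trans (generated_weak_limit gen (fun n => normR_expi (- th n))) _.
split=> -[[l [hl l0]] [w hw]]; (split; last by exists w; apply/phase_ratio_cvgE).
- by exists (l tt); split; [exact/cvgCE/hl | case: l0 => -[]].
- by exists (fun=> l); split; [move=> _; exact/cvgCE | exists tt].
Qed.

Lemma qrw_line_moments (c : int -> 'M[C]_2) :
  (forall i, unitary (c i)) -> (forall i, nontrivial (c i)) ->
  (weak_cvg (fun n => mpow (UZf c) n) (fun _ _ => 0) <-> cvg_mx2 (muZ c) 0) /\
  (forall theta : nat -> R,
    (exists L : imx R,
       weak_cvg (fun n j k => expi (- theta n) * mpow (UZf c) n j k) L
       /\ exists j k, L j k != 0)
    <->
    ((exists l : 'M[C]_2,
        cvg_mx2 (fun n => expi (- theta n) *: muZ c n) l /\ l != 0)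
     /\ exists w : C, cvgC (fun n => expi (theta n.+1 - theta n)) w)).
Proof.
move=> c_unitary c_nontrivial.
have gen := UZf_generated c_nontrivial (fun i => unitary_coef11_neq0 (c_unitary i) (c_nontrivial i)).
split=> [|th].
  split=> [/(generated_weak_cvg0 gen) mu0 a b | mu0].
    by rewrite mxE; apply/cvgCE/(eq_tendsto _ (mu0 (a, b))) => n; rewrite mxE.
  apply/(generated_weak_cvg0 gen) => -[a b]; move/cvgCE: (mu0 a b); rewrite mxE.
  by apply: eq_tendsto => n; rewrite mxE.
apply: iff_trans (generated_weak_limit gen (fun n => normR_expi (- th n))) _.
split=> -[[l [hl l0]] [w hw]]; (split; last by exists w; apply/phase_ratio_cvgE).
- exists (\matrix_(a, b) l (a, b)); split.
    move=> a b; rewrite mxE; apply/cvgCE/(eq_tendsto _ (hl (a, b))) => n.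
    by rewrite !mxE.
  by apply/matrix0Pn; case: l0 => -[a b] lab; exists a, b; rewrite mxE.
- exists (fun b => l b.1 b.2); split; last by have /matrix0Pn [a [b lab]] := l0; exists (a, b).
  by move=> [a b]; move/cvgCE: (hl a b); apply: eq_tendsto => n; rewrite !mxE.
Qed.

End Moments.

Theorem proposition1 (R : realType) :
  (forall c : nat -> 'M[R[i]]_2,
    (forall i, unitary (c i)) -> (forall i, nontrivial (c i)) ->
    (weak_cvg (fun n => mpow (UN c) n) (fun _ _ => 0) <-> cvgC (muN c) 0)
    /\
    (forall theta : nat -> R,
      (exists L : imx R,
         weak_cvg (fun n j k => expi (- theta n) * mpow (UN c) n j k) L
         /\ exists j k, L j k != 0)
      <->
      ((exists l : R[i], cvgC (fun n => expi (- theta n) * muN c n) l /\ l != 0)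
       /\ exists w : R[i], cvgC (fun n => expi (theta n.+1 - theta n)) w)))
  /\
  (forall c : int -> 'M[R[i]]_2,
    (forall i, unitary (c i)) -> (forall i, nontrivial (c i)) ->
    (weak_cvg (fun n => mpow (UZf c) n) (fun _ _ => 0) <-> cvg_mx2 (muZ c) 0)
    /\
    (forall theta : nat -> R,
      (exists L : imx R,
         weak_cvg (fun n j k => expi (- theta n) * mpow (UZf c) n j k) L
         /\ exists j k, L j k != 0)
      <->
      ((exists l : 'M[R[i]]_2,
          cvg_mx2 (fun n => expi (- theta n) *: muZ c n) l /\ l != 0)
       /\ exists w : R[i], cvgC (fun n => expi (theta n.+1 - theta n)) w))).
Proof.
split; [exact: qrw_half_line_moments | exact: qrw_line_moments].
Qed.
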